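(* Let $\Sigma$ be a finite set of constraints, each of which is either a data-full dtgd or a degd, and let $D$ be a distributed instance. Then there is no infinite chase sequence for $D$ with $\Sigma$.
   Context: Data values come from a linearly ordered set (e.g. $\mathbb{N}$, $\mathbb{Z}$ or $\mathbb{Q}$). A schema is a finite set of relation symbols with fixed arities; a fact is $R(a_1,\dots,a_m)$ with data values $a_i$. A distributed instance $D=(G,(I_k)_{k\in N})$ consists of a finite set $N$ of nodes, a finite global instance $G$ (a set of facts) and, for each node $k$, a finite local instance $I_k$ with $\bigcup_k I_k\subseteq G$; we write $f@k$ for $f\in I_k$ (a distributed fact). There are disjoint infinite sets of data variables and node variables. A relation atom is $R(t_1,\dots,t_m)$ with each $t_i$ a data variable or a data value; a distributed atom $A@\kappa$ consists of a relation atom $A$ and a node variable $\kappa$; a comparison atom is $t<t'$ or $t\le t'$ with $t,t'$ data variables or data values. A distribution tgd (dtgd) $\sigma$ has the form $\mathcal{A},\mathcal{C}\to\mathcal{A}'$ where $\mathcal{A},\mathcal{A}'$ are finite sets of relation and distributed atoms and $\mathcal{C}$ is a finite set of comparison atoms over variables of $\mathcal{A}$; its body is $\mathcal{A}\cup\mathcal{C}$, $\mathrm{rbody}(\sigma)=\mathcal{A}$, its head is $\mathcal{A}'$. A distribution egd (degd) has the form $\mathcal{A},\mathcal{C}\to s=s'$ where $s,s'$ are either both data variables of $\mathcal{A}$ or both node variables of $\mathcal{A}$. A valuation maps data variables to data values (and is the identity on data values) and node variables to nodes; it satisfies a relation atom $A$ on $D$ if $V(A)\in G$, a distributed atom $A@\kappa$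 if $V(A)\in I_{V(\kappa)}$, and comparison atoms in the obvious way. A dtgd is data-full if every data variable of its head occurs in its body (node variables of the head may be new, i.e. existentially quantified). A data-full dtgd may be assumed to mention at most one node variable in its head; it is node-creating if its head mentions a node variable $\kappa$ (its head variable) not occurring in its body. Chase step: a dtgd $\sigma$ is applicable to $D$ with valuation $W$ if $W$ satisfies the body of $\sigma$ on $D$, there is no valuation $W'$ agreeing with $W$ on the body variables with $W'(\mathrm{head}(\sigma))\subseteq D$ (i.e. all head atoms satisfied), and, if $\sigma$ is node-creating, $W$ maps the head variable to a node not occurring in $D$. The result is $D'=D\cup W(\mathrm{head}(\sigma))$ (global facts are added to the global instance, distributed facts $f@k$ to the local instance of $k$, creating $k$ if new). A chase sequence for $D$ with $\Sigma$ is a sequence $D_0,D_1,\dots$ with $D_0=D$ and each $D_{i+1}$ obtained from $D_i$ by a chase step with some dtgd of $\Sigma$. *)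

From HB Require Import structures.
From Stdlib Require Import List.
From mathcomp Require Import all_boot all_order finmap.
Set Implicit Arguments. Unset Strict Implicit. Unset Printing Implicit Defensive.
Import Order.TTheory.
Local Open Scope fset_scope.

Section Distributed.
Context {disp : Order.disp_t} (V : orderType disp).

(* relation symbols, nodes, data variables, node variables: all encoded by nat
   (data variables and node variables live in separate syntactic positions,
   hence are disjoint) *)

Definition fact := (nat * seq V)%type.

Inductive dterm := DVar of nat | DVal of V.

Record ratom := RAtom { rsym : nat; rargs : seq dterm }.

(* atom of a tgd body/head: (A, None) = relation atom A,
   (A, Some kappa) = distributed atom A@kappa *)
Definition atom := (ratom * option nat)%type.

Inductive catom := CLt of dterm & dterm | CLe of dterm & dterm.

Record dtgd := DTgd { tg_body : seq atom; tg_cmp : seq catom; tg_head : seq atom }.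

Inductive eqatom := EqData of nat & nat | EqNode of nat & nat.

Record degd := DEgd { eg_body : seq atom; eg_cmp : seq catom; eg_eq : eqatom }.

Inductive constr := CTgd of dtgd | CEgd of degd.

Record dinst := DInst { dnodes : {fset nat}; dglob : {fset fact};
                        dloc : nat -> {fset fact} }.

Definition dinst_wf (ar : nat -> nat) (D : dinst) : Prop :=
  (forall k, k \notin dnodes D -> dloc D k = fset0) /\
  (forall k, dloc D k `<=` dglob D) /\
  (forall f, f \in dglob D -> size f.2 = ar f.1).

Definition dvars_terms (s : seq dterm) : seq nat :=
  pmap (fun t => if t is DVar x then Some x else None) s.
Definition dvars_atoms (s : seq atom) : seq nat :=
  flatten (map (fun a => dvars_terms (rargs a.1)) s).
Definition nvars_atoms (s : seq atom) : seq nat := pmap snd s.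
Definition dvars_cmps (s : seq catom) : seq nat :=
  flatten (map (fun c => match c with
                         | CLt t u => dvars_terms [:: t; u]
                         | CLe t u => dvars_terms [:: t; u] end) s).

Definition atoms_wf (ar : nat -> nat) (s : seq atom) : Prop :=
  forall a, In a s -> size (rargs a.1) = ar (rsym a.1).

Definition dtgd_wf (ar : nat -> nat) (s : dtgd) : Prop :=
  atoms_wf ar (tg_body s) /\ atoms_wf ar (tg_head s) /\
  {subset dvars_cmps (tg_cmp s) <= dvars_atoms (tg_body s)}.

Definition degd_wf (ar : nat -> nat) (e : degd) : Prop :=
  atoms_wf ar (eg_body e) /\
  {subset dvars_cmps (eg_cmp e) <= dvars_atoms (eg_body e)} /\
  match eg_eq e with
  | EqData x y => x \in dvars_atoms (eg_body e) /\ y \in dvars_atoms (eg_body e)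
  | EqNode k l => k \in nvars_atoms (eg_body e) /\ l \in nvars_atoms (eg_body e)
  end.

Definition data_full (s : dtgd) : Prop :=
  {subset dvars_atoms (tg_head s) <= dvars_atoms (tg_body s)}.

Definition single_head_nvar (s : dtgd) : Prop :=
  size (undup (nvars_atoms (tg_head s))) <= 1.

Definition new_nvars (s : dtgd) : seq nat :=
  [seq k <- nvars_atoms (tg_head s) | k \notin nvars_atoms (tg_body s)].

Record valuation := Val { vdata : nat -> V; vnode : nat -> nat }.

Definition eval_term (W : valuation) (t : dterm) : V :=
  match t with DVar x => vdata W x | DVal a => a end.
Definition eval_ratom (W : valuation) (A : ratom) : fact :=
  (rsym A, map (eval_term W) (rargs A)).

Definition sat_atom (D : dinst) (W : valuation) (a : atom) : Prop :=
  match a.2 with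
  | None => eval_ratom W a.1 \in dglob D
  | Some k => eval_ratom W a.1 \in dloc D (vnode W k)
  end.
Definition sat_cmp (W : valuation) (c : catom) : Prop :=
  match c with
  | CLt t u => (eval_term W t < eval_term W u)%O
  | CLe t u => (eval_term W t <= eval_term W u)%O
  end.

Definition agree_body (s : dtgd) (W W' : valuation) : Prop :=
  (forall x, x \in dvars_atoms (tg_body s) -> vdata W x = vdata W' x) /\
  (forall k, k \in nvars_atoms (tg_body s) -> vnode W k = vnode W' k).

Definition applicable (s : dtgd) (D : dinst) (W : valuation) : Prop :=
  (forall a, In a (tg_body s) -> sat_atom D W a) /\
  (forall c, In c (tg_cmp s) -> sat_cmp W c) /\
  ~ (exists W', agree_body s W W' /\
                forall a, In a (tg_head s) -> sat_atom D W' a) /\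
  (forall k, k \in new_nvars s -> vnode W k \notin dnodes D).

(* D' = D u W(head): global facts go to G, distributed facts f@k go to I_k
   (and to G, keeping the union of local instances inside G); nodes of
   distributed head facts are created if new *)
Definition chase_result (s : dtgd) (D : dinst) (W : valuation) : dinst :=
  DInst (dnodes D `|` seq_fset tt (map (vnode W) (nvars_atoms (tg_head s))))
        (dglob D `|` seq_fset tt (map (fun a => eval_ratom W a.1) (tg_head s)))
        (fun k => dloc D k `|`
           seq_fset tt [seq eval_ratom W a.1 | a <- tg_head s &
                         if a.2 is Some kap then vnode W kap == k else false]).

Definition chase_step (Sigma : seq constr) (D D' : dinst) : Prop :=
  exists s, In (CTgd s) Sigma /\
  exists W, applicable s D W /\ D' = chase_result s D W.

Definition infinite_chase (Sigma : seq constr) (D : dinst) : Prop :=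
  exists Ds : nat -> dinst, Ds 0 = D /\ forall i, chase_step Sigma (Ds i) (Ds i.+1).

Definition constr_ok (ar : nat -> nat) (c : constr) : Prop :=
  match c with
  | CTgd s => dtgd_wf ar s /\ data_full s /\ single_head_nvar s
  | CEgd e => degd_wf ar e
  end.

End Distributed.

From HB Require Import structures.
From Stdlib Require Import List.
From mathcomp Require Import all_boot all_order finmap.
Set Implicit Arguments. Unset Strict Implicit. Unset Printing Implicit Defensive.
Local Open Scope fset_scope.

(* Every chase step adds a fact that was missing, so the number of global and
   local facts strictly grows.  Data-fullness confines all facts to a finite
   universe: tuples of values of D and of constants of the heads.  The number
   of nodes is bounded as well.  Call the instantiated head of a step, with
   each atom flagged as distributed or not, its key.  A node-creating step
   fires only if no existing node realises its key (otherwise the head would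
   already be satisfied, as the head has a single node variable), and the new
   node realises it.  Keys range over a finite set, so each new node realises
   a previously unrealised key.  Hence the number of facts plus the number of
   realised keys strictly increases along the chase while staying bounded. *)

Lemma InP (T : eqType) (x : T) (s : seq T) : reflect (In x s) (x \in s).
Proof.
elim: s => [|y s IH] /=; first by constructor.
rewrite inE; apply: (iffP orP) => [[/eqP->|/IH]|[->|/IH]]; by [left|right|left|right].
Qed.

Lemma In_flatten_map (A : Type) (B : eqType) (g : A -> seq B) (l : seq A) a x :
  In a l -> x \in g a -> x \in flatten (map g l).
Proof.
move=> + xa; elim: l => //= b l IH [ba|/IH xl]; rewrite mem_cat ?xl ?orbT //.
by rewrite ba xa.
Qed.

Fixpoint words (T : Type) (X : seq T) n : seq (seq T) :=
  if n is m.+1 then [seq x :: w | x <- X, w <- words X m] else [:: [::]].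

Lemma mem_words (T : eqType) (X : seq T) n w :
  (w \in words X n) = (size w == n) && all (mem X) w.
Proof.
elim: n w => [|n IH] [|x w] /=; rewrite ?inE //.
- by apply/allpairsP => -[[y v] []].
- apply/allpairsP/idP => [[[y v] /= [yX + [-> ->]]]|/and3P[sw xX wX]].
    by rewrite IH eqSS => /andP[-> ->]; rewrite yX.
  by exists (x, w); rewrite xX IH -eqSS sw wX.
Qed.

Lemma fsubset_ltn_card (K : choiceType) (A B : {fset K}) x :
  A `<=` B -> x \in B -> x \notin A -> #|` A| < #|` B|.
Proof.
move=> AB xB xA; apply: fproper_ltn_card; rewrite fproperE AB /=.
by apply/fsubsetPn; exists x.
Qed.

Lemma ltn_sum_seq (I : eqType) (r : seq I) (F G : I -> nat) j :
  uniq r -> j \in r -> (forall i, i \in r -> F i <= G i) -> F j < G j ->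
  \sum_(i <- r) F i < \sum_(i <- r) G i.
Proof.
move=> ur jr FG ltj; rewrite (bigD1_seq j) // [X in _ < X](bigD1_seq j) //=.
rewrite -addSn leq_add // big_seq_cond [X in _ <= X]big_seq_cond.
by apply: leq_sum => i /andP[/FG].
Qed.

Lemma bounded_ltn_chain (f : nat -> nat) (B : nat) :
  (forall i, f i < f i.+1) -> ~ (forall i, f i <= B).
Proof.
move=> incr bnd; have le_f i : i <= f i.
  by elim: i => // i IH; exact: leq_ltn_trans IH (incr i).
by have := leq_trans (le_f B.+1) (bnd B.+1); rewrite ltnn.
Qed.

Lemma sub_count_lt (T : eqType) (p q : pred T) (s : seq T) x :
  subpred p q -> x \in s -> ~~ p x -> q x -> count p s < count q s.
Proof.
move=> pq + npx qx; elim: s => //= y s IH; rewrite inE => /predU1P[<-|xs].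
  by rewrite (negbTE npx) qx add1n ltnS sub_count.
by rewrite -addnS leq_add ?IH //; case: (boolP (p y)) => // /pq ->.
Qed.

Section Atoms.
Context {disp : Order.disp_t} (V : orderType disp).

Definition dterm_code (t : dterm V) : nat + V :=
  match t with DVar x => inl x | DVal a => inr a end.
Definition dterm_decode (c : nat + V) : dterm V :=
  match c with inl x => DVar V x | inr a => DVal a end.
Lemma dterm_codeK : cancel dterm_code dterm_decode. Proof. by case. Qed.
HB.instance Definition _ := Equality.copy (dterm V) (can_type dterm_codeK).

Definition ratom_code (A : ratom V) : nat * seq (dterm V) := (rsym A, rargs A).
Lemma ratom_codeK : cancel ratom_code (fun c => RAtom c.1 c.2). Proof. by case. Qed.
HB.instance Definition _ := Equality.copy (ratom V) (can_type ratom_codeK).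

Lemma mem_dvars_terms x (ts : seq (dterm V)) : (x \in dvars_terms ts) = (DVar V x \in ts).
Proof. by elim: ts => [|[y|a] ts IH] //=; rewrite !inE IH. Qed.

Lemma dvars_atomsP x (s : seq (atom V)) :
  reflect (exists2 a, a \in s & DVar V x \in rargs a.1) (x \in dvars_atoms s).
Proof.
apply: (iffP flatten_mapP) => -[a As xa]; exists a => //; by rewrite ?mem_dvars_terms in xa *.
Qed.

Lemma nvars_atomsP k (s : seq (atom V)) :
  reflect (exists A, (A, Some k) \in s) (k \in nvars_atoms s).
Proof.
rewrite mem_pmap; apply: (iffP mapP) => [[[A o] As /= ->]|[A As]]; first by exists A.
by exists (A, Some k).
Qed.

Lemma single_head_nvarP (s : dtgd V) k k' : single_head_nvar s ->
  k \in nvars_atoms (tg_head s) -> k' \in nvars_atoms (tg_head s) -> k = k'.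
Proof.
rewrite /single_head_nvar -(mem_undup (nvars_atoms _)) -[k' \in _]mem_undup.
by case: undup => [|z [|? ?]] //= _; rewrite !inE => /eqP-> /eqP->.
Qed.

End Atoms.

Section ChaseStep.
Context {disp : Order.disp_t} (V : orderType disp).
Implicit Types (D : dinst V) (W : valuation V) (a : atom V).

Definition atom_inst D W a : {fset fact V} :=
  if a.2 is Some k then dloc D (vnode W k) else dglob D.

Lemma sat_atomE D W a : sat_atom D W a <-> eval_ratom W a.1 \in atom_inst D W a.
Proof. by case: a => A []. Qed.

Definition subdinst (D1 D2 : dinst V) : Prop :=
  [/\ dnodes D1 `<=` dnodes D2, dglob D1 `<=` dglob D2 & forall k, dloc D1 k `<=` dloc D2 k].

Definition dinst_closed D : Prop :=
  (forall k, k \notin dnodes D -> dloc D k = fset0) /\ (forall k, dloc D k `<=` dglob D).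

Lemma atom_inst_glob D W a : dinst_closed D -> atom_inst D W a `<=` dglob D.
Proof. by case=> _ LG; case: a => A [k|]; [exact: LG | exact: fsubset_refl]. Qed.

Definition dsize D : nat := #|` dglob D| + \sum_(n <- dnodes D) #|` dloc D n|.

Definition head_key (s : dtgd V) W : seq (fact V * bool) :=
  [seq (eval_ratom W a.1, isSome a.2) | a <- tg_head s].

Definition realized D (key : seq (fact V * bool)) : bool :=
  has (fun n => all (fun p => p.1 \in if p.2 then dloc D n else dglob D) key) (dnodes D).

Lemma realized_sub D1 D2 : subdinst D1 D2 -> subpred (realized D1) (realized D2).
Proof.
case=> sN sG sL key /hasP[n nD1 /allP keyn]; apply/hasP; exists n; first exact: fsubsetP nD1.
apply/allP => -[f [|]] /keyn /=; [exact: fsubsetP | exact: fsubsetP].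
Qed.

Variables (s : dtgd V) (D : dinst V) (W : valuation V).
Local Notation D' := (chase_result s D W).

Lemma subdinst_chase_result : subdinst D D'.
Proof. by split=> *; apply: fsubsetUl. Qed.

Lemma mem_chase_result_glob f :
  (f \in dglob D') = (f \in dglob D) || (f \in [seq eval_ratom W a.1 | a <- tg_head s]).
Proof. by rewrite in_fsetU seq_fsetE. Qed.

Lemma mem_chase_result_nodes n :
  (n \in dnodes D') = (n \in dnodes D) || (n \in map (vnode W) (nvars_atoms (tg_head s))).
Proof. by rewrite in_fsetU seq_fsetE. Qed.

Lemma chase_result_sat a : a \in tg_head s -> eval_ratom W a.1 \in atom_inst D' W a.
Proof.
case: a => A [k|] ah; rewrite /= in_fsetU seq_fsetE; apply/orP; right; apply/mapP;
  by [exists (A, Some k); rewrite ?mem_filter /= ?eqxx | exists (A, None)].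
Qed.

Lemma chase_result_closed : dinst_closed D -> dinst_closed D'.
Proof.
case=> emptyD LG; split=> [k kN|k].
- have kD : k \notin dnodes D by apply: contra kN; rewrite mem_chase_result_nodes => ->.
  apply/fsetP => f; rewrite in_fsetU emptyD // in_fset0 seq_fsetE /=.
  apply/negbTE/mapP => -[[A [kap|]]]; rewrite mem_filter //= => /andP[/eqP kk ah] _.
  move: kN; rewrite mem_chase_result_nodes -kk map_f ?orbT //.
  by apply/nvars_atomsP; exists A.
- apply/fsubsetP => f; rewrite in_fsetU => /orP[/(fsubsetP (LG k)) fG|].
    by rewrite in_fsetU fG.
  rewrite seq_fsetE => /mapP[a]; rewrite mem_filter => /andP[_ ah] ->.
  by rewrite mem_chase_result_glob (map_f (fun a : atom V => eval_ratom W a.1)) ?orbT.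
Qed.

Hypothesis app : applicable s D W.

Lemma applicable_body_sat a : a \in tg_body s -> eval_ratom W a.1 \in atom_inst D W a.
Proof. by case: app => bodysat _ /InP /bodysat /sat_atomE. Qed.

Lemma applicable_unsat_head :
  exists2 a, a \in tg_head s & eval_ratom W a.1 \notin atom_inst D W a.
Proof.
case: app => _ [_ [noW' _]]; apply/allPn/negP => /allP headsat; apply: noW'.
by exists W; split=> [|a /InP /headsat /sat_atomE].
Qed.

Lemma dsize_chase_result : dinst_closed D -> dsize D < dsize D'.
Proof.
move=> [emptyD _]; have [sN sG sL] := subdinst_chase_result.
have locD : \sum_(n <- dnodes D) #|` dloc D n| = \sum_(n <- dnodes D') #|` dloc D n|.
  by apply: big_fset_incl sN _ => n _ nD; rewrite emptyD.
have [[A o] ah unsat] := applicable_unsat_head; have sat := chase_result_sat ah.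
rewrite /dsize locD; case: o ah unsat sat => [k|] ah unsat sat.
- rewrite -addnS leq_add ?fsubset_leq_card //.
  apply: (ltn_sum_seq (j := vnode W k)) => [||n _|]; first exact: fset_uniq.
  + by rewrite mem_chase_result_nodes map_f ?orbT //; apply/nvars_atomsP; exists A.
  + exact: fsubset_leq_card.
  + exact: fsubset_ltn_card (sL _) sat unsat.
- rewrite -addSn leq_add ?leq_sum ?(fsubset_ltn_card sG sat unsat) //.
  by move=> n _; apply: fsubset_leq_card.
Qed.

Lemma chase_result_nodes_old :
  dinst_closed D -> new_nvars s = [::] -> dnodes D' `<=` dnodes D.
Proof.
move=> [emptyD _] nonew; apply/fsubsetP => n.
rewrite mem_chase_result_nodes => /orP[//|/mapP[k kh ->]].
have /nvars_atomsP[A Ab] : k \in nvars_atoms (tg_body s).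
  apply: contraT => kNb; have : k \in new_nvars s by rewrite mem_filter kNb.
  by rewrite nonew.
have := applicable_body_sat Ab; apply: contraLR => kN.
by rewrite /atom_inst /= emptyD.
Qed.

Section NewNode.
Variable kap : nat.
Hypotheses (single : single_head_nvar s) (kap_head : kap \in nvars_atoms (tg_head s)).

Lemma head_nvar_eq a k : a \in tg_head s -> a.2 = Some k -> k = kap.
Proof.
case: a => A o ah /= ko; apply: single_head_nvarP single _ kap_head.
by apply/nvars_atomsP; exists A; rewrite -ko.
Qed.

Lemma chase_result_nodes_new : dnodes D' `<=` vnode W kap |` dnodes D.
Proof.
apply/fsubsetP => n; rewrite mem_chase_result_nodes in_fset1U.
case/orP=> [->|/mapP[k kh ->]]; first by rewrite orbT.
by rewrite (single_head_nvarP single kh kap_head) eqxx.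
Qed.

Lemma realized_chase_result : realized D' (head_key s W).
Proof.
apply/hasP; exists (vnode W kap); first by rewrite mem_chase_result_nodes map_f ?orbT.
apply/allP => _ /mapP[[A o] ah ->] /=; have := chase_result_sat ah.
by case: o ah => [k|] ah //=; rewrite (head_nvar_eq ah erefl).
Qed.

Lemma applicable_not_realized :
  kap \notin nvars_atoms (tg_body s) -> ~~ realized D (head_key s W).
Proof.
case: app => _ [_ [noW' _]] kap_new; apply/hasP => -[n _ /allP keyn]; apply: noW'.
(* Redirect the head node variable to the node realising the key. *)
exists (Val (vdata W) (fun k => if k == kap then n else vnode W k)); split.
  by split=> // k kb /=; case: eqP => // kk; rewrite -kk kb in kap_new.
move=> [A o] /InP ah; apply/sat_atomE; have := keyn _ (map_f _ ah).
by case: o ah => [k|] ah //; rewrite /atom_inst /= (head_nvar_eq ah erefl) eqxx.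
Qed.

End NewNode.
End ChaseStep.

Section Termination.
Context {disp : Order.disp_t} (V : orderType disp) (Sigma : seq (constr V)) (D0 : dinst V).

Definition heads_of (c : constr V) : seq (atom V) := if c is CTgd s then tg_head s else [::].

Definition head_atoms : seq (atom V) := flatten (map heads_of Sigma).

Definition consts (ts : seq (dterm V)) : seq V :=
  pmap (fun t => if t is DVal a then Some a else None) ts.

Definition value_domain : seq V :=
  flatten [seq f.2 | f <- dglob D0] ++ flatten [seq consts (rargs a.1) | a <- head_atoms].

Definition fact_universe : seq (fact V) :=
  dglob D0 ++ flatten [seq [seq (rsym a.1, w) | w <- words value_domain (size (rargs a.1))]
                      | a <- head_atoms].

Definition keys : seq (seq (fact V * bool)) :=
  flatten [seq words [seq (f, b) | f <- fact_universe, b <- [:: true; false]]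
                     (size (heads_of c)) | c <- Sigma].

Definition measure (D : dinst V) : nat := dsize D + count (realized D) keys.

Definition chase_inv (D : dinst V) : Prop :=
  [/\ dinst_closed D, {subset dglob D <= fact_universe}
    & #|` dnodes D| <= #|` dnodes D0| + count (realized D) keys].

Lemma head_atoms_In s a : In (CTgd s) Sigma -> a \in tg_head s -> a \in head_atoms.
Proof. exact: (@In_flatten_map _ _ heads_of Sigma (CTgd s)). Qed.

Lemma fact_universe_values f : f \in fact_universe -> {subset f.2 <= value_domain}.
Proof.
rewrite mem_cat => /orP[fD0 v vf|/flatten_mapP[a _ /mapP[w + ->]]].
  by rewrite mem_cat; apply/orP; left; apply/flatten_mapP; exists f.
by rewrite mem_words => /andP[_ /allP].
Qed.

Lemma fact_universe_head s W a : In (CTgd s) Sigma -> a \in tg_head s ->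
  {subset map (eval_term W) (rargs a.1) <= value_domain} -> eval_ratom W a.1 \in fact_universe.
Proof.
move=> sS ah vals; rewrite mem_cat; apply/orP; right.
apply/flatten_mapP; exists a; first exact: head_atoms_In sS ah.
by apply: map_f; rewrite mem_words size_map eqxx; apply/allP.
Qed.

Lemma chase_result_fact_universe s D W : In (CTgd s) Sigma -> data_full s ->
  applicable s D W -> dinst_closed D -> {subset dglob D <= fact_universe} ->
  {subset dglob (chase_result s D W) <= fact_universe}.
Proof.
move=> sS full app closed DU f; rewrite mem_chase_result_glob.
case/orP=> [/DU //|/mapP[a ah ->]].
apply: (fact_universe_head sS ah) => _ /mapP[[x|v] xa ->] /=.
  have /dvars_atomsP[b bb xb] : x \in dvars_atoms (tg_body s).
    by apply: full; apply/dvars_atomsP; exists a.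
  have bU := DU _ (fsubsetP (atom_inst_glob W b closed) _ (applicable_body_sat app bb)).
  exact: fact_universe_values bU _ (map_f (eval_term W) xb).
rewrite mem_cat; apply/orP; right.
apply/flatten_mapP; exists a; first exact: head_atoms_In sS ah.
by rewrite mem_pmap (map_f (fun t : dterm V => if t is DVal a then Some a else None) xa).
Qed.

Lemma head_key_keys s W : In (CTgd s) Sigma ->
  (forall a, a \in tg_head s -> eval_ratom W a.1 \in fact_universe) -> head_key s W \in keys.
Proof.
move=> sS headU; apply: In_flatten_map sS _; rewrite mem_words size_map eqxx.
apply/allP => _ /mapP[a ah ->]; apply: (allpairs_f pair); last by case: isSome.
exact: headU.
Qed.

Lemma chase_result_nodes_card s D W : In (CTgd s) Sigma -> single_head_nvar s ->
  applicable s D W -> dinst_closed D ->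
  {subset dglob (chase_result s D W) <= fact_universe} ->
  #|` dnodes D| <= #|` dnodes D0| + count (realized D) keys ->
  #|` dnodes (chase_result s D W)| <=
    #|` dnodes D0| + count (realized (chase_result s D W)) keys.
Proof.
move=> sS single app closed D'U nodesD; set D' := chase_result s D W.
have realized_D' := realized_sub (subdinst_chase_result s D W).
case nonew: (new_nvars s) => [|kap others].
  apply: leq_trans (fsubset_leq_card (chase_result_nodes_old app closed nonew)) _.
  by apply: leq_trans nodesD _; rewrite leq_add2l sub_count.
have : kap \in new_nvars s by rewrite nonew mem_head.
rewrite mem_filter => /andP[kap_new kap_head].
have key_in : head_key s W \in keys.
  apply: head_key_keys sS _ => a ah; apply: D'U; rewrite mem_chase_result_glob.
  by rewrite (map_f (fun a : atom V => eval_ratom W a.1)) ?orbT.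
have count_lt : count (realized D) keys < count (realized D') keys.
  apply: sub_count_lt realized_D' key_in _ (realized_chase_result D W single kap_head).
  exact: (applicable_not_realized app single kap_head kap_new).
apply: leq_trans (fsubset_leq_card (chase_result_nodes_new D W single kap_head)) _.
rewrite cardfsU1; apply: leq_trans (leq_add (leq_b1 _) nodesD) _.
by rewrite add1n -addnS leq_add2l.
Qed.

Lemma chase_result_inv s D W : In (CTgd s) Sigma -> data_full s -> single_head_nvar s ->
  applicable s D W -> chase_inv D ->
  chase_inv (chase_result s D W) /\ measure D < measure (chase_result s D W).
Proof.
move=> sS full single app [closed DU nodesD].
have D'U := chase_result_fact_universe sS full app closed DU.
split; first by split; [exact: chase_result_closed | | exact: chase_result_nodes_card].
rewrite /measure -addSn leq_add ?dsize_chase_result ?sub_count //.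
exact: realized_sub (subdinst_chase_result s D W).
Qed.

Lemma chase_inv_init (ar : nat -> nat) : dinst_wf ar D0 -> chase_inv D0.
Proof. by case=> emptyD [LG _]; split=> // [f fD|]; rewrite ?mem_cat ?fD ?leq_addr. Qed.

Lemma chase_step_inv (ar : nat -> nat) D D' : (forall c, In c Sigma -> constr_ok ar c) ->
  chase_step Sigma D D' -> chase_inv D -> chase_inv D' /\ measure D < measure D'.
Proof.
move=> Sigma_ok [s [sS [W [app ->]]]]; have [_ [full single]] := Sigma_ok _ sS.
exact: chase_result_inv.
Qed.

Lemma measure_bound D : chase_inv D ->
  measure D <=
    size fact_universe + (#|` dnodes D0| + size keys) * size fact_universe + size keys.
Proof.
case=> [[_ LG] DU nodesD]; rewrite /measure /dsize leq_add ?count_size //.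
have loc_le n : #|` dloc D n| <= size fact_universe.
  by apply: uniq_leq_size (fset_uniq _) _ => f /(fsubsetP (LG n)) /DU.
rewrite leq_add ?(uniq_leq_size (fset_uniq _) DU) //.
apply: (@leq_trans (\sum_(n <- dnodes D) size fact_universe)); first exact: leq_sum.
rewrite big_const_seq count_predT iter_addn_0 mulnC leq_mul2r.
by rewrite (leq_trans nodesD) ?leq_add2l ?count_size ?orbT.
Qed.

End Termination.

Theorem proposition4p6 (disp : Order.disp_t) (V : orderType disp)
  (ar : nat -> nat) (Sigma : seq (constr V)) (D : dinst V) :
  (forall c, In c Sigma -> constr_ok ar c) ->
  dinst_wf ar D ->
  ~ infinite_chase Sigma D.
Proof.
move=> Sigma_ok wfD [Ds [Ds0 steps]].
have step i := chase_step_inv (D0 := D) Sigma_ok (steps i).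
have inv i : chase_inv Sigma D (Ds i).
  by elim: i => [|i /step[] //]; rewrite Ds0; apply: chase_inv_init wfD.
apply: (@bounded_ltn_chain (fun i => measure Sigma D (Ds i))) => i.
  by case: (step i (inv i)).
exact: measure_bound (inv i).
Qed.
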